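(* Let $n\ge4$ and for $1\le p\le n$ let $J_p$ be the set of regular elements of $\mathcal{ORCT}_n$ whose image has exactly $p$ elements. Then for all $1\le p\le n-2$, $\langle J_p\rangle\subseteq\langle J_{p+1}\rangle$, where $\langle A\rangle$ denotes the subsemigroup of $\mathcal{T}_n$ generated by $A$.
   Context: $\mathcal{T}_n$ is the full transformation semigroup on $[n]=\{1,\dots,n\}$ under composition. $\alpha$ is a contraction if $|x\alpha-y\alpha|\le|x-y|$ for all $x,y$; order-preserving if $x\le y\Rightarrow x\alpha\le y\alpha$; order-reversing if $x\le y\Rightarrow x\alpha\ge y\alpha$. $\mathcal{ORCT}_n$ is the semigroup of contractions that are order-preserving or order-reversing; $\alpha\in\mathcal{ORCT}_n$ is regular if $\alpha\beta\alpha=\alpha$ for some $\beta\in\mathcal{ORCT}_n$. *)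

(* [n] = {1..n} is represented by 'I_n = {0..n-1} (shift by one). *)
From mathcomp Require Import all_boot.
Set Implicit Arguments. Unset Strict Implicit. Unset Printing Implicit Defensive.

(* Full transformation semigroup T_n; maps written on the right: x(ab) = (xa)b. *)
Definition trans (n : nat) := {ffun 'I_n -> 'I_n}.

Definition tcomp (n : nat) (a b : trans n) : trans n := [ffun x => b (a x)].

Definition dist (x y : nat) : nat := (x - y) + (y - x).

Definition contraction (n : nat) (a : trans n) : Prop :=
  forall x y : 'I_n, dist (a x) (a y) <= dist x y.

Definition order_preserving (n : nat) (a : trans n) : Prop :=
  forall x y : 'I_n, x <= y -> a x <= a y.

Definition order_reversing (n : nat) (a : trans n) : Prop :=
  forall x y : 'I_n, x <= y -> a y <= a x.

Definition ORCT (n : nat) (a : trans n) : Prop :=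
  contraction a /\ (order_preserving a \/ order_reversing a).

Definition regular_ORCT (n : nat) (a : trans n) : Prop :=
  exists b : trans n, ORCT b /\ tcomp (tcomp a b) a = a.

Definition rank (n : nat) (a : trans n) : nat := #|[set a x | x : 'I_n]|.

Definition J (n p : nat) (a : trans n) : Prop :=
  ORCT a /\ regular_ORCT a /\ rank a = p.

Inductive generated (n : nat) (A : trans n -> Prop) : trans n -> Prop :=
  | gen_base a : A a -> generated A a
  | gen_mul a b : generated A a -> generated A b -> generated A (tcomp a b).

From mathcomp Require Import all_boot zify.
Set Implicit Arguments. Unset Strict Implicit. Unset Printing Implicit Defensive.

(* The regular elements of ORCT_n of rank p are exactly the ramps: maps that
   are constant below and above a window [k, k+p-1] and send the window
   isometrically, increasingly or decreasingly, onto an interval [c, c+p-1].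
   A monotone contraction moves by at most one per step, and regularity
   a = a b a with b a contraction forbids flat steps strictly inside the
   image.  When p <= n-2 there is room to write every ramp of rank p as a
   product of three ramps of rank p+1, so the generators of <J_p> already
   lie in <J_{p+1}>. *)

Definition clamp (x lo hi : nat) : nat := minn (maxn x lo) hi.

Definition ramp (k p c : nat) (up : bool) (x : nat) : nat :=
  if up then c + clamp x k (k + p - 1) - k
  else c + (k + p - 1) - clamp x k (k + p - 1).

Definition rampf (n k p c : nat) (up : bool) : trans n :=
  [ffun x : 'I_n => insubd x (ramp k p c up x)].

Lemma tcompE n (a b : trans n) x : tcomp a b x = b (a x).
Proof. by rewrite ffunE. Qed.

Section RampMap.

Variables (n k p c : nat) (up : bool).
Hypotheses (p_gt0 : 0 < p) (kp_le : k + p <= n) (cp_le : c + p <= n).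

Lemma rampfE x : val (rampf n k p c up x) = ramp k p c up x.
Proof.
rewrite ffunE val_insubd; have := ltn_ord x.
by rewrite /ramp /clamp; case: up => ?; case: ifP => //; lia.
Qed.

Lemma rampf_ORCT : ORCT (rampf n k p c up).
Proof.
split; first by move=> x y; rewrite /dist !rampfE /ramp /clamp; case: up; lia.
have mono (x y : 'I_n) : x <= y ->
    if up then rampf n k p c up x <= rampf n k p c up y
    else rampf n k p c up y <= rampf n k p c up x.
  by rewrite !rampfE /ramp /clamp; case: up; lia.
by case: up mono => mono; [left | right] => x y /mono.
Qed.

Lemma rank_rampf : rank (rampf n k p c up) = p.
Proof.
have x0 : 'I_n by exists 0; lia.
pose window (i : 'I_p) : 'I_n := insubd x0 (k + i).
have windowE (i : 'I_p) : val (window i) = k + i.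
  by rewrite val_insubd; have := ltn_ord i; case: ifP => //; lia.
rewrite /rank; have -> : [set rampf n k p c up x | x : 'I_n] =
                         [set rampf n k p c up (window i) | i : 'I_p].
  apply/setP => y; apply/imsetP/imsetP => [[x _ ->]|[i _ ->]]; last by exists (window i).
  have i_lt : clamp x k (k + p - 1) - k < p by rewrite /clamp; lia.
  pose i : 'I_p := Ordinal i_lt.
  exists i => //; apply: val_inj; rewrite !rampfE windowE /= /ramp /clamp; case: up; lia.
rewrite card_imset ?card_ord // => i j /(congr1 val).
rewrite !rampfE !windowE /ramp /clamp => eq_ij; apply: val_inj => /=.
by have := ltn_ord i; have := ltn_ord j; move: eq_ij; case: up; lia.
Qed.

End RampMap.

Lemma rampf_J n k p c up : 0 < p -> k + p <= n -> c + p <= n -> J p (rampf n k p c up).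
Proof.
move=> p_gt0 kp_le cp_le; split; first exact: rampf_ORCT.
split; last exact: rank_rampf.
exists (rampf n c p k up); split; first exact: rampf_ORCT.
apply/ffunP => x; apply: val_inj; rewrite !tcompE !rampfE /ramp /clamp; case: up; lia.
Qed.

Section RegularShape.

Variables (n : nat) (f g : nat -> nat).
Hypotheses (n_gt0 : 0 < n)
  (f_lt : forall j, j < n -> f j < n) (g_lt : forall y, y < n -> g y < n)
  (f_contr : forall i j, i < n -> j < n -> dist (f i) (f j) <= dist i j)
  (g_contr : forall i j, i < n -> j < n -> dist (g i) (g j) <= dist i j)
  (fgf : forall j, j < n -> f (g (f j)) = f j)
  (f_mono : forall i j, i < n -> j < n -> i <= j -> f i <= f j).

(* Otherwise, say [b := g (f x) <= x]: then [e := g (f n.-1) > x.+1], and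
   [f] climbs from [f b = f x] to [f e = f n.-1] in unit steps, one of them
   flat, so [f n.-1 - f x < e - b]; but [g] contracts, so
   [e - b <= f n.-1 - f x].  The case [x < b] is symmetric, via [g (f 0)]. *)
Lemma flat_step_at_ends x : x.+1 < n -> f x = f x.+1 -> f x = f 0 \/ f x = f n.-1.
Proof.
move=> x_lt flat.
have [|f0_neq] := eqVneq (f x) (f 0); first by left.
have [|fn_neq] := eqVneq (f x) (f n.-1); first by right.
exfalso.
have fx_lt := f_lt (ltnW x_lt).
have f0_lt := f_lt n_gt0.
have fn_lt : f n.-1 < n by apply: f_lt; lia.
have fgf0 := fgf n_gt0; have fgfx := fgf (ltnW x_lt); have fgfn := @fgf n.-1 ltac:(lia).
have a_lt := g_lt f0_lt; have b_lt := g_lt fx_lt; have e_lt := g_lt fn_lt.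
set a := g (f 0) in fgf0 a_lt *; set b := g (f x) in fgfx b_lt *.
set e := g (f n.-1) in fgfn e_lt *.
have f0x := f_mono n_gt0 (ltnW x_lt) (leq0n x).
have fxn := @f_mono x n.-1 (ltnW x_lt) ltac:(lia) ltac:(lia).
have fx1n := @f_mono x.+1 n.-1 x_lt ltac:(lia) ltac:(lia).
case: (leqP b x) => b_le.
- have e_gt : x.+1 < e by case: (leqP e x.+1) => // ?; have := f_mono e_lt x_lt; lia.
  have := f_contr b_lt (ltnW x_lt); have := f_contr x_lt e_lt; have := g_contr fx_lt fn_lt.
  have := f_mono b_lt (ltnW x_lt) b_le; have := f_mono x_lt e_lt (ltnW e_gt).
  rewrite /dist; lia.
- have a_lt' : a < x by case: (leqP x a) => // ?; have := f_mono (ltnW x_lt) a_lt; lia.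
  have := f_contr a_lt (ltnW x_lt); have := f_contr x_lt b_lt; have := g_contr f0_lt fx_lt.
  have := f_mono a_lt (ltnW x_lt) (ltnW a_lt'); have := f_mono x_lt b_lt b_le.
  rewrite /dist; lia.
Qed.

Lemma increasing_ramp : exists k p c,
  [/\ 0 < p, k + p <= n, c + p <= n & forall j, j < n -> f j = ramp k p c true j].
Proof.
pose at_bottom j := (j < n) && (f j == f 0).
have bottom0 : exists j, at_bottom j by exists 0; rewrite /at_bottom n_gt0 eqxx.
have bottom_le j : at_bottom j -> j <= n by case/andP; lia.
have [k /andP[k_lt /eqP fk] k_max] := ex_maxnP bottom0 bottom_le.
set D := f n.-1 - f 0.
have fn_lt : f n.-1 < n by apply: f_lt; lia.
have f0n := @f_mono 0 n.-1 n_gt0 ltac:(lia) ltac:(lia).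
have bottom j : j <= k -> f j = f 0.
  move=> j_le; have := @f_mono 0 j n_gt0 ltac:(lia) ltac:(lia).
  have := @f_mono j k ltac:(lia) k_lt j_le; lia.
have climb j : k + j < n -> f (k + j) = f 0 + minn j D.
  elim: j => [|j IHj] kj_lt; first by rewrite addn0 fk; lia.
  have {}IHj := IHj ltac:(lia).
  have := @f_contr (k + j) (k + j.+1) ltac:(lia) kj_lt; rewrite /dist => step.
  have := @f_mono (k + j) (k + j.+1) ltac:(lia) kj_lt ltac:(lia).
  have := @f_mono (k + j.+1) n.-1 kj_lt ltac:(lia) ltac:(lia).
  have [flat|] := eqVneq (f (k + j)) (f (k + j.+1)); last by rewrite IHj; lia.
  have [bot|top] := flat_step_at_ends (x := k + j) ltac:(lia) ltac:(by rewrite -addnS).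
  + have : at_bottom (k + j.+1) by rewrite /at_bottom kj_lt -flat bot eqxx.
    by move/k_max; lia.
  + by rewrite -flat IHj; lia.
have kD_lt : k + D < n.
  by have := climb (n.-1 - k) ltac:(lia); rewrite (_ : k + (n.-1 - k) = n.-1); lia.
exists k, D.+1, (f 0); split; try lia.
move=> j j_lt; rewrite /ramp /clamp; case: (leqP j k) => [j_le | ?].
  by rewrite bottom //; lia.
by have := climb (j - k) ltac:(lia); rewrite (_ : k + (j - k) = j); lia.
Qed.

End RegularShape.

Lemma decreasing_ramp n f g : 0 < n ->
  (forall j, j < n -> f j < n) -> (forall y, y < n -> g y < n) ->
  (forall i j, i < n -> j < n -> dist (f i) (f j) <= dist i j) ->
  (forall i j, i < n -> j < n -> dist (g i) (g j) <= dist i j) ->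
  (forall j, j < n -> f (g (f j)) = f j) ->
  (forall i j, i < n -> j < n -> i <= j -> f j <= f i) ->
  exists k p c,
    [/\ 0 < p, k + p <= n, c + p <= n & forall j, j < n -> f j = ramp k p c false j].
Proof.
move=> n_gt0 f_lt g_lt f_contr g_contr fgf f_anti.
pose f' j := n.-1 - f j; pose g' y := g (n.-1 - y).
have [||||||k [p [c [p_gt0 kp_le cp_le f'E]]]] := @increasing_ramp n f' g' n_gt0.
- by move=> j /f_lt; rewrite /f'; lia.
- by move=> y y_lt; apply: g_lt; lia.
- move=> i j i_lt j_lt; have := f_contr i j i_lt j_lt.
  by have := f_lt i i_lt; have := f_lt j j_lt; rewrite /f' /dist; lia.
- move=> i j i_lt j_lt.
  by have := g_contr (n.-1 - i) (n.-1 - j) ltac:(lia) ltac:(lia); rewrite /g' /dist; lia.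
- by move=> j j_lt; rewrite /f' /g' subKn ?fgf //; have := f_lt j j_lt; lia.
- by move=> i j i_lt j_lt ij; have := f_anti i j i_lt j_lt ij; rewrite /f'; lia.
exists k, p, (n - c - p); split; try lia.
by move=> j j_lt; have := f'E j j_lt; have := f_lt j j_lt; rewrite /f' /ramp /clamp; lia.
Qed.

Lemma J_rampf n p (a : trans n) : 0 < n -> J p a ->
  exists k c up, [/\ 0 < p, k + p <= n, c + p <= n & a = rampf n k p c up].
Proof.
case: n a => [//|n] a _ [[a_contr a_mono] [[b [[b_contr _] aba]] rank_a]].
pose f j := val (a (inord j)); pose g y := val (b (inord y)).
have fE (x : 'I_n.+1) : val (a x) = f x by rewrite /f inord_val.
have f_lt j : j < n.+1 -> f j < n.+1 by rewrite ltn_ord.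
have g_lt y : y < n.+1 -> g y < n.+1 by rewrite ltn_ord.
have f_contr i j : i < n.+1 -> j < n.+1 -> dist (f i) (f j) <= dist i j.
  by move=> i_lt j_lt; have := a_contr (inord i) (inord j); rewrite !inordK.
have g_contr i j : i < n.+1 -> j < n.+1 -> dist (g i) (g j) <= dist i j.
  by move=> i_lt j_lt; have := b_contr (inord i) (inord j); rewrite !inordK.
have fgf j : j < n.+1 -> f (g (f j)) = f j.
  move=> _; rewrite /f /g !inord_val.
  by have := congr1 (fun h : trans _ => val (h (inord j))) aba; rewrite /= !tcompE => ->.
have [k [q [c [up [q_gt0 kq_le cq_le f_ramp]]]]] : exists k q c up,
    [/\ 0 < q, k + q <= n.+1, c + q <= n.+1 & forall j, j < n.+1 -> f j = ramp k q c up j].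
  case: a_mono => [a_mono | a_anti].
  - have [|k [q [c ?]]] := increasing_ramp (isT : 0 < n.+1) f_lt g_lt f_contr g_contr fgf.
      move=> i j i_lt j_lt ij.
      by have := a_mono (inord i) (inord j); rewrite !inordK // => /(_ ij).
    by exists k, q, c, true.
  - have [|k [q [c ?]]] := decreasing_ramp (isT : 0 < n.+1) f_lt g_lt f_contr g_contr fgf.
      move=> i j i_lt j_lt ij.
      by have := a_anti (inord i) (inord j); rewrite !inordK // => /(_ ij).
    by exists k, q, c, false.
have a_ramp : a = rampf n.+1 k q c up.
  by apply/ffunP => x; apply: val_inj; rewrite rampfE // fE f_ramp.
have q_eq : q = p by rewrite -rank_a a_ramp rank_rampf.
by exists k, c, up; rewrite -q_eq.
Qed.

(* The first factor maps the window [k, k+p-1] onto [1, p], reversed iff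
   [k = 0], and everything else into {0, p}; the last one maps [1, p] onto
   [c, c+p-1], reversed iff [c = 0]; the middle one sends 0 where it sends 1
   and maps [1, p] onto itself, reversing it iff that is needed to end up with
   orientation [up]. *)
Lemma ramp_factor k p c up x : 0 < p ->
  let s := (0 < c) == ((0 < k) == up) in
  ramp k p c up x = ramp 0 p.+1 c.-1 (0 < c) (ramp 1 p.+1 s s (ramp k.-1 p.+1 0 (0 < k) x)).
Proof.
move=> p_gt0 s; rewrite {}/s.
by case: up; case: k => [|k]; case: c => [|c] /=;
  rewrite /ramp /clamp /minn /maxn /=; repeat case: ifP; lia.
Qed.

Lemma rampf_generated n k p c up : 0 < p -> p.+2 <= n -> k + p <= n -> c + p <= n ->
  generated (@J n p.+1) (rampf n k p c up).
Proof.
move=> p_gt0 pn kp_le cp_le; set s := (0 < c) == ((0 < k) == up).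
have -> : rampf n k p c up = tcomp (tcomp (rampf n k.-1 p.+1 0 (0 < k)) (rampf n 1 p.+1 s s))
                                   (rampf n 0 p.+1 c.-1 (0 < c)).
  apply/ffunP => x; apply: val_inj.
  by rewrite !tcompE !rampfE; [exact: ramp_factor | lia..].
have s_le1 := leq_b1 s.
apply: gen_mul; first apply: gen_mul.
all: by apply: gen_base; apply: rampf_J; lia.
Qed.

Theorem proposition18 (n : nat) (hn : 4 <= n) (p : nat) (hp1 : 1 <= p) (hp2 : p <= n - 2)
  (a : trans n) :
  generated (@J n p) a -> generated (@J n p.+1) a.
Proof.
elim=> [b Jb | b b' _ gen_b _ gen_b']; last exact: gen_mul.
have [k [c [up [_ kp_le cp_le ->]]]] := J_rampf (leq_trans (isT : 0 < 4) hn) Jb.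
by apply: rampf_generated => //; lia.
Qed.
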